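(* Let $f:A\to B$ be a ring homomorphism, $\mathfrak b$ an ideal of $B$, and $A\bowtie^f\mathfrak b:=\{(a,f(a)+b): a\in A,\ b\in\mathfrak b\}\subseteq A\times B$. For a maximal ideal $\mathfrak m$ of $A$ let $S_{\mathfrak m}:=f(A\setminus\mathfrak m)+\mathfrak b$ and $\mathfrak b_{S_{\mathfrak m}}:=\mathfrak bB_{S_{\mathfrak m}}$. Assume $\mathfrak b_{S_{\mathfrak m}}=\{0\}$ for every maximal ideal $\mathfrak m$ of $A$ containing $f^{-1}(\mathfrak b)$. If $A$ is a semi-hereditary ring (resp. a semi-hereditary Noetherian ring), $B_{\mathfrak n}$ is a valuation domain for every maximal ideal $\mathfrak n$ of $B$ not containing $\mathfrak b$, and $\mathfrak b$ is a coherent $A$-module (resp. a finitely generated $A$-module) with the structure induced by $f$, then $A\bowtie^f\mathfrak b$ is a semi-hereditary ring.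
   Context: All rings are commutative with identity. A ring is semi-hereditary if every finitely generated ideal is projective. $\mathfrak b$ is an $A$-module via $a\cdot x=f(a)x$. A module is coherent if it is finitely generated and every finitely generated submodule is finitely presented. $B_{S_{\mathfrak m}}$ is the localization of $B$ at the multiplicative set $S_{\mathfrak m}$. *)

From HB Require Import structures.
From mathcomp Require Import all_boot all_order all_algebra.
From mathcomp Require Import ring.
Set Implicit Arguments. Unset Strict Implicit. Unset Printing Implicit Defensive.
Import Order.TTheory GRing.Theory Num.Theory.
Local Open Scope ring_scope.

Section Ideals.
Variable R : comPzRingType.

Definition is_ideal (I : R -> Prop) : Prop :=
  [/\ I 0, (forall x y, I x -> I y -> I (x - y)) & (forall r x, I x -> I (r * x))].

Definition maximal_ideal (m : R -> Prop) : Prop :=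
  [/\ is_ideal m, ~ m 1 &
      forall J : R -> Prop, is_ideal J -> (forall x, m x -> J x) ->
        (forall x, J x <-> m x) \/ J 1].

Definition fg_ideal (I : R -> Prop) : Prop :=
  exists s : seq R, forall x,
    I x <-> exists c : 'I_(size s) -> R, x = \sum_(i < size s) c i * s`_i.

Definition noetherian : Prop := forall I : R -> Prop, is_ideal I -> fg_ideal I.

Definition is_unit (x : R) : Prop := exists y, x * y = 1.

Definition valuation_domain : Prop :=
  [/\ (1 : R) != 0,
      (forall x y : R, x * y = 0 -> x = 0 \/ y = 0) &
      (forall x y : R, (exists z, y = x * z) \/ (exists z, x = y * z))].
End Ideals.

Section Modules.
Variables (R : comPzRingType) (V : lmodType R).

Definition submodule (P : V -> Prop) : Prop :=
  [/\ P 0, (forall x y, P x -> P y -> P (x + y)) & (forall r x, P x -> P (r *: x))].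

Definition in_span (s : seq V) (v : V) : Prop :=
  exists c : 'I_(size s) -> R, v = \sum_(i < size s) c i *: s`_i.

Definition fg_module (P : V -> Prop) : Prop :=
  exists s : seq V, forall v, P v <-> in_span s v.

Definition fin_presented (P : V -> Prop) : Prop :=
  exists s : seq V, (forall v, P v <-> in_span s v) /\
    exists t : seq 'rV[R]_(size s), forall c : 'rV[R]_(size s),
      (\sum_(i < size s) c ord0 i *: s`_i = 0) <->
      exists d : 'I_(size t) -> R, c = \sum_(j < size t) d j *: t`_j.

Definition coherent_module (P : V -> Prop) : Prop :=
  fg_module P /\
  forall Q : V -> Prop, submodule Q -> (forall v, Q v -> P v) ->
    fg_module Q -> fin_presented Q.

Definition linear_on (N : lmodType R) (P : V -> Prop) (h : V -> N) : Prop :=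
  (forall x y, P x -> P y -> h (x + y) = h x + h y) /\
  (forall r x, P x -> h (r *: x) = r *: h x).

Definition projective_module (P : V -> Prop) : Prop :=
  forall (M N : lmodType R) (g : {linear M -> N}) (h : V -> N),
    (forall y, exists x, g x = y) -> linear_on P h ->
    exists k : V -> M, linear_on P k /\ forall x, P x -> g (k x) = h x.
End Modules.

Definition semi_hereditary (R : comPzRingType) : Prop :=
  forall I : R -> Prop, fg_ideal I -> projective_module (V := R^o) I.

(* Localization, via its universal characterization:                  *)
Definition is_localization (B L : comPzRingType) (S : B -> Prop)
    (phi : {rmorphism B -> L}) : Prop :=
  [/\ (forall s, S s -> is_unit (phi s)),
      (forall x, phi x = 0 -> exists2 s, S s & s * x = 0) &
      (forall y : L, exists x s, S s /\ y * phi s = phi x)].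

Section Restriction.
Variables (A B : comPzRingType) (f : {rmorphism A -> B}).

Definition restr (g : {rmorphism A -> B}) : Type := B.
Local Notation M := (restr f).
HB.instance Definition _ := GRing.Zmodule.on M.
Definition restr_scale (a : A) (x : M) : M := (f a * (x : B) : B).

Fact restr_scalerA a b v : restr_scale a (restr_scale b v) = restr_scale (a * b) v.
Proof. by rewrite /restr_scale rmorphM mulrA. Qed.
Fact restr_scale1r : left_id 1 restr_scale.
Proof. by move=> x; rewrite /restr_scale rmorph1 mul1r. Qed.
Fact restr_scalerDr : right_distributive restr_scale +%R.
Proof. by move=> a x y; rewrite /restr_scale mulrDr. Qed.
Fact restr_scalerDl v : {morph restr_scale^~ v : a b / a + b}.
Proof. by move=> a b; rewrite /restr_scale rmorphD mulrDl. Qed.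

HB.instance Definition _ := GRing.Zmodule_isLmodule.Build A M
  restr_scalerA restr_scale1r restr_scalerDr restr_scalerDl.
End Restriction.
Arguments restr {A B} g.

Section Amalgamation.
Variables (A B : comPzRingType) (f : {rmorphism A -> B}) (b : {pred B}).
Hypothesis hb : is_ideal (fun x => x \in b).

Definition amalg_pred : {pred A * B} := [pred x | x.2 - f x.1 \in b].

Lemma amalg_pred_spec (x : A * B) :
  x \in amalg_pred <-> exists a c, c \in b /\ x = (a, f a + c).
Proof.
split.
  move=> hx; exists x.1, (x.2 - f x.1); split=> //.
  by case: x hx => u v /= _; rewrite addrC subrK.
by case=> a [c [hc ->]]; rewrite inE /= addrAC subrr add0r.
Qed.

Fact amalg_subring : subring_closed amalg_pred.
Proof.
case: hb => h0 hB hM; split.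
- by rewrite inE /= rmorph1 subrr.
- case=> [x1 x2] [y1 y2]; rewrite !inE /= => hx hy.
  have -> : x2 - y2 - f (x1 - y1) = (x2 - f x1) - (y2 - f y1).
    by rewrite rmorphB; ring.
  exact: (hB).
- case=> [x1 x2] [y1 y2]; rewrite !inE /= => hx hy.
  have -> : x2 * y2 - f (x1 * y1)
            = f x1 * (y2 - f y1) - (0 - (y2 * (x2 - f x1))).
    by rewrite rmorphM; ring.
  apply: (hB); first exact: (hM).
  by apply: (hB) => //; apply: (hM).
Qed.

HB.instance Definition _ := GRing.isSubringClosed.Build (A * B)%type amalg_pred
  amalg_subring.

Record amalg (hb0 : is_ideal (fun x => x \in b)) :=
  Amalg { amalg_val : A * B; amalg_valP : amalg_val \in amalg_pred }.
Local Notation T := (amalg hb).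
HB.instance Definition _ := [isSub for @amalg_val hb].
HB.instance Definition _ := [Choice of T by <:].
HB.instance Definition _ := GRing.SubChoice_isSubComPzRing.Build _ _ T amalg_subring.
End Amalgamation.

Arguments amalg {A B} f b _.

From HB Require Import structures.
From mathcomp Require Import all_boot all_order all_algebra.
From mathcomp Require Import ring boolp generic_quotient.
From mathcomp Require classical_sets.
Set Implicit Arguments. Unset Strict Implicit. Unset Printing Implicit Defensive.
Import GRing.Theory.
Local Open Scope ring_scope.

(* Semi-heredity is checked at maximal ideals P: if divisibility is total up to
   multipliers outside P, and every x either is killed by some s outside P or has
   its whole annihilator killed by one t outside P, then the ideal of multipliers
   c for which c * I admits a dual basis lies in no maximal ideal, so every
   finitely generated ideal I is projective.
   A maximal ideal Q of the amalgamation either contains 0 x b, and then it lies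
   over a maximal m of A with b_(S_m) = 0: as b is finitely generated, 0 x b is
   killed by one element outside Q and the conditions come from A; or it lies over
   a maximal n of B not containing b, where B_n is a valuation domain, and the
   finiteness of the annihilators inside b (from coherence, resp. Noetherianity)
   makes them killed by one element outside Q. *)

Module Localization.
Local Open Scope quotient_scope.

Section Localization.
Variables (B : comPzRingType) (S : B -> Prop).
Hypothesis S1 : S 1.
Hypothesis SM : forall a b, S a -> S b -> S (a * b).

Inductive fraction := Fraction { frac_val :> B * B; _ : `[< S frac_val.2 >] }.
HB.instance Definition _ := [isSub for frac_val].
HB.instance Definition _ := [Choice of fraction by <:].

Lemma den_in (x : fraction) : S x.2. Proof. by case: x => [[a d]] /= /asboolP. Qed.
Lemma den_mul_in (x y : fraction) : `[< S (x.2 * y.2) >].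
Proof. by apply/asboolP/SM; apply: den_in. Qed.

Definition frac_equiv (x y : fraction) : bool :=
  `[< exists2 t, S t & t * (x.1 * y.2 - y.1 * x.2) = 0 >].

Lemma frac_equivP (x y : fraction) :
  reflect (exists2 t, S t & t * (x.1 * y.2 - y.1 * x.2) = 0) (frac_equiv x y).
Proof. exact: asboolP. Qed.

Lemma frac_equiv_refl : reflexive frac_equiv.
Proof. by move=> x; apply/frac_equivP; exists 1 => //; ring. Qed.

Lemma frac_equiv_sym : symmetric frac_equiv.
Proof.
suff sym x y : frac_equiv x y -> frac_equiv y x by move=> x y; apply/idP/idP; apply: sym.
move/frac_equivP=> [t St e]; apply/frac_equivP; exists t => //.
by rewrite -[0]oppr0 -e; ring.
Qed.

Lemma frac_equiv_trans : transitive frac_equiv.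
Proof.
move=> y x z /frac_equivP[t St e1] /frac_equivP[u Su e2]; apply/frac_equivP.
exists (t * u * y.2); first by apply: SM; [apply: SM | apply: den_in].
have -> : t * u * y.2 * (x.1 * z.2 - z.1 * x.2) =
  u * z.2 * (t * (x.1 * y.2 - y.1 * x.2)) + t * x.2 * (u * (y.1 * z.2 - z.1 * y.2)).
  by ring.
by rewrite e1 e2; ring.
Qed.

Canonical frac_equiv_equiv :=
  EquivRel frac_equiv frac_equiv_refl frac_equiv_sym frac_equiv_trans.
Definition type := {eq_quot frac_equiv}.
HB.instance Definition _ : EqQuotient _ frac_equiv type := EqQuotient.on type.
HB.instance Definition _ := Choice.on type.

Lemma eq_piP (x y : fraction) : \pi_type x = \pi_type y <-> frac_equiv x y.
Proof. by split=> [/eqmodP|e]; [|apply/eqmodP]. Qed.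

Lemma repr_equiv (x : fraction) : frac_equiv x (repr (\pi_type x)).
Proof. by rewrite frac_equiv_sym; apply/eq_piP; rewrite reprK. Qed.

Definition mk_frac (a d : B) (Sd : S d) : fraction := @Fraction (a, d) (asboolT Sd).

Definition frac_add (x y : fraction) : fraction :=
  @Fraction (x.1 * y.2 + y.1 * x.2, x.2 * y.2) (den_mul_in x y).
Definition frac_opp (x : fraction) : fraction :=
  @Fraction (- x.1, x.2) (asboolT (den_in x)).
Definition frac_mul (x y : fraction) : fraction :=
  @Fraction (x.1 * y.1, x.2 * y.2) (den_mul_in x y).

Lemma frac_add_equiv x x' y y' : frac_equiv x x' -> frac_equiv y y' ->
  frac_equiv (frac_add x y) (frac_add x' y').
Proof.
move=> /frac_equivP[t St e1] /frac_equivP[u Su e2]; apply/frac_equivP.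
exists (t * u); first exact: SM.
have -> : t * u * ((x.1 * y.2 + y.1 * x.2) * (x'.2 * y'.2) -
   (x'.1 * y'.2 + y'.1 * x'.2) * (x.2 * y.2)) =
   u * y.2 * y'.2 * (t * (x.1 * x'.2 - x'.1 * x.2)) +
   t * x.2 * x'.2 * (u * (y.1 * y'.2 - y'.1 * y.2)) by ring.
by rewrite e1 e2; ring.
Qed.

Lemma frac_opp_equiv x x' : frac_equiv x x' -> frac_equiv (frac_opp x) (frac_opp x').
Proof.
move=> /frac_equivP[t St e]; apply/frac_equivP; exists t => //=.
by rewrite -[0]oppr0 -e; ring.
Qed.

Lemma frac_mul_equiv x x' y y' : frac_equiv x x' -> frac_equiv y y' ->
  frac_equiv (frac_mul x y) (frac_mul x' y').
Proof.
move=> /frac_equivP[t St e1] /frac_equivP[u Su e2]; apply/frac_equivP.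
exists (t * u); first exact: SM.
have -> : t * u * (x.1 * y.1 * (x'.2 * y'.2) - x'.1 * y'.1 * (x.2 * y.2)) =
   u * y.1 * y'.2 * (t * (x.1 * x'.2 - x'.1 * x.2)) +
   t * x'.1 * x.2 * (u * (y.1 * y'.2 - y'.1 * y.2)) by ring.
by rewrite e1 e2; ring.
Qed.

Definition add := lift_op2 type frac_add.
Lemma pi_add : {morph \pi : x y / frac_add x y >-> add x y}.
Proof. by move=> x y; unlock add; apply/eq_piP/frac_add_equiv; apply: repr_equiv. Qed.
Canonical pi_add_morph := PiMorph2 pi_add.

Definition opp := lift_op1 type frac_opp.
Lemma pi_opp : {morph \pi : x / frac_opp x >-> opp x}.
Proof. by move=> x; unlock opp; apply/eq_piP/frac_opp_equiv; apply: repr_equiv. Qed.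
Canonical pi_opp_morph := PiMorph1 pi_opp.

Definition mul := lift_op2 type frac_mul.
Lemma pi_mul : {morph \pi : x y / frac_mul x y >-> mul x y}.
Proof. by move=> x y; unlock mul; apply/eq_piP/frac_mul_equiv; apply: repr_equiv. Qed.
Canonical pi_mul_morph := PiMorph2 pi_mul.

Definition zero : type := \pi_type (mk_frac 0 S1).
Definition one : type := \pi_type (mk_frac 1 S1).

(* Every ring axiom holds already for representatives, with witness [t = 1]. *)
Local Ltac frac_ring := apply/eq_piP/frac_equivP; exists 1 => //=; ring.

Lemma addA : associative add.
Proof. by do 3!elim/quotW=> ?; rewrite !piE; frac_ring. Qed.
Lemma addC : commutative add.
Proof. by do 2!elim/quotW=> ?; rewrite !piE; frac_ring. Qed.
Lemma add0r : left_id zero add.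
Proof. by elim/quotW=> ?; rewrite /zero !piE; frac_ring. Qed.
Lemma addNr : left_inverse zero opp add.
Proof. by elim/quotW=> ?; rewrite /zero !piE; frac_ring. Qed.
HB.instance Definition _ := GRing.isZmodule.Build type addA addC add0r addNr.

Lemma mulA : associative mul.
Proof. by do 3!elim/quotW=> ?; rewrite !piE; frac_ring. Qed.
Lemma mulC : commutative mul.
Proof. by do 2!elim/quotW=> ?; rewrite !piE; frac_ring. Qed.
Lemma mul1r : left_id one mul.
Proof. by elim/quotW=> ?; rewrite /one !piE; frac_ring. Qed.
Lemma mulDl : left_distributive mul add.
Proof. by do 3!elim/quotW=> ?; rewrite !piE; frac_ring. Qed.
HB.instance Definition _ := GRing.Zmodule_isComPzRing.Build type mulA mulC mul1r mulDl.

Definition loc_map (x : B) : type := \pi_type (mk_frac x S1).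

Lemma loc_map_zmod : zmod_morphism loc_map.
Proof. by move=> x y; rewrite /loc_map -[X in _ = _ + X]pi_opp -[RHS]pi_add; frac_ring. Qed.
HB.instance Definition _ := GRing.isZmodMorphism.Build B type loc_map loc_map_zmod.

Lemma loc_map_monoid : monoid_morphism loc_map.
Proof. by split=> [//|x y]; rewrite /loc_map -[RHS]pi_mul; frac_ring. Qed.
HB.instance Definition _ := GRing.isMonoidMorphism.Build B type loc_map loc_map_monoid.

Lemma loc_mapP : is_localization S (loc_map : {rmorphism B -> type}).
Proof.
split.
- move=> s Ss; exists (\pi_type (mk_frac 1 Ss)); rewrite /= /loc_map -[_ * _]pi_mul.
  frac_ring.
- move=> x /eq_piP/frac_equivP[t St e]; exists t => //; rewrite -e /=; ring.
- elim/quotW=> y; exists y.1, y.2; split; first exact: den_in.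
  rewrite /= /loc_map -[_ * _]pi_mul; frac_ring.
Qed.
End Localization.
End Localization.

Lemma exists_localization (B : comPzRingType) (S : B -> Prop) :
  S 1 -> (forall a b, S a -> S b -> S (a * b)) ->
  exists (L : comPzRingType) (phi : {rmorphism B -> L}), is_localization S phi.
Proof. by move=> S1 SM; do 2!eexists; apply: (Localization.loc_mapP S1 SM). Qed.

Section IdealTheory.
Variables (R : comPzRingType) (I : R -> Prop).
Hypothesis idI : is_ideal I.

Lemma ideal0 : I 0. Proof. by case: idI. Qed.
Lemma idealB x y : I x -> I y -> I (x - y). Proof. by case: idI => _ + _; apply. Qed.
Lemma idealM r x : I x -> I (r * x). Proof. by case: idI => _ _; apply. Qed.
Lemma idealM_r r x : I x -> I (x * r). Proof. by rewrite mulrC; apply: idealM. Qed.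
Lemma idealN x : I x -> I (- x).
Proof. by move=> Ix; rewrite -sub0r; apply: idealB => //; apply: ideal0. Qed.
Lemma idealD x y : I x -> I y -> I (x + y).
Proof. by move=> Ix Iy; rewrite -[y]opprK; apply: idealB => //; apply: idealN. Qed.
End IdealTheory.

Section DualBasis.
Variable R : comPzRingType.

Definition ideal_span (s : seq R) (x : R) : Prop :=
  exists c : 'I_(size s) -> R, x = \sum_(i < size s) c i * s`_i.

Definition dual_basis (s : seq R) : Prop :=
  exists psi : 'I_(size s) -> R -> R,
    (forall i, linear_on (V := R^o) (N := R^o) (ideal_span s) (psi i)) /\
    forall x, ideal_span s x -> x = \sum_(i < size s) psi i x * s`_i.

Variable s : seq R.

Lemma ideal_span_ideal : is_ideal (ideal_span s).
Proof.
split.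
- by exists (fun=> 0); rewrite big1 // => i _; rewrite mul0r.
- move=> _ _ [c ->] [d ->]; exists (fun i => c i - d i).
  by rewrite -sumrB; apply: eq_bigr => i _; rewrite mulrBl.
- move=> r _ [c ->]; exists (fun i => r * c i).
  by rewrite mulr_sumr; apply: eq_bigr => i _; rewrite mulrA.
Qed.

Lemma ideal_span_nth (i : 'I_(size s)) : ideal_span s s`_i.
Proof.
exists (fun j => (j == i)%:R).
by rewrite (bigD1 i) //= eqxx mul1r big1 ?addr0 // => j /negbTE ->; rewrite mul0r.
Qed.

Lemma dual_basis_projective : dual_basis s -> projective_module (V := R^o) (ideal_span s).
Proof.
have idI := ideal_span_ideal.
move=> [psi [psi_lin psiE]] M N g h g_surj [hD hZ].
pose m i := proj1_sig (cid (g_surj (h s`_i))).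
have gm i : g (m i) = h s`_i by rewrite /m; case: cid.
exists (fun x => \sum_(i < size s) psi i x *: m i); split; first split.
- move=> x y Ix Iy; rewrite -big_split /=; apply: eq_bigr => i _.
  by case: (psi_lin i) => psiD _; rewrite psiD // scalerDl.
- move=> r x Ix; rewrite scaler_sumr; apply: eq_bigr => i _.
  by case: (psi_lin i) => _ psiZ; rewrite psiZ // scalerA.
move=> x Ix; rewrite linear_sum [in RHS](psiE x Ix).
have [_ ->] : ideal_span s (\sum_(i < size s) psi i x * s`_i) /\
    h (\sum_(i < size s) psi i x * s`_i) = \sum_(i < size s) psi i x *: h s`_i.
  elim/big_rec2: _ => [|i y1 y2 _ [Iy1 <-]].
    by split; [apply: ideal0 | have := hZ 0 0 (ideal0 idI); rewrite !scale0r].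
  have Isi := ideal_span_nth i.
  split; first by apply: idealD => //; apply: idealM.
  by rewrite hD //; [rewrite -hZ | apply: idealM].
by apply: eq_bigr => i _; rewrite linearZ /= gm.
Qed.

Definition ideal_span_pred : {pred R^o} := fun x => `[< ideal_span s x >].

Lemma ideal_span_submod_closed : submod_closed ideal_span_pred.
Proof.
have idI := ideal_span_ideal.
split; first by apply/asboolP; apply: ideal0.
move=> a u v /asboolP Iu /asboolP Iv; apply/asboolP.
by apply: idealD => //; apply: idealM.
Qed.
HB.instance Definition _ := GRing.isSubmodClosed.Build R R^o ideal_span_pred
  (GRing.submod_closed_semi ideal_span_submod_closed).

Record span_elt := SpanElt { span_val : R^o; _ : span_val \in ideal_span_pred }.
HB.instance Definition _ := [isSub for span_val].
HB.instance Definition _ := [Choice of span_elt by <:].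
HB.instance Definition _ := [SubChoice_isSubLmodule of span_elt by <:].

(* Lift the identity of [ideal_span s] along the surjection [R^n -> ideal_span s]
   sending the basis vectors to [s]; the coordinates of the lift are the [psi i]. *)
Lemma projective_dual_basis : projective_module (V := R^o) (ideal_span s) -> dual_basis s.
Proof.
move=> proj.
pose comb (v : 'rV[R]_(size s)) : span_elt :=
  insubd (0 : span_elt) (\sum_(i < size s) v ord0 i * s`_i : R^o).
have combE v : val (comb v) = \sum_(i < size s) v ord0 i * s`_i.
  by rewrite insubdK //; apply/asboolP; exists (v ord0).
have comb_lin : linear comb.
  move=> a u v; apply: val_inj; rewrite /= !combE scaler_sumr -big_split /=.
  by apply: eq_bigr => i _; rewrite !mxE /= mulrDl -mulrA.
pose g : {linear 'rV[R]_(size s) -> span_elt} :=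
  HB.pack comb (GRing.isLinear.Build _ _ _ _ comb comb_lin).
have g_surj y : exists v, g v = y.
  have /asboolP[c cE] := valP y.
  by exists (\row_i c i); apply: val_inj; rewrite /= combE cE; apply: eq_bigr => i _; rewrite mxE.
pose incl (x : R^o) : span_elt := insubd (0 : span_elt) x.
have inclE x : ideal_span s x -> val (incl x) = x by move=> Ix; rewrite insubdK //; apply/asboolP.
have incl_lin : linear_on (V := R^o) (ideal_span s) incl.
  have idI := ideal_span_ideal.
  split=> [x y Ix Iy | r x Ix]; apply: val_inj.
  - by rewrite raddfD /= !inclE //; apply: idealD.
  - by rewrite linearZ /= !inclE //; apply: idealM.
have [k [[kD kZ] gk]] := proj _ _ g incl g_surj incl_lin.
exists (fun i x => k x ord0 i); split.
  by move=> i; split=> [x y Ix Iy | r x Ix]; rewrite ?kD ?kZ // mxE.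
by move=> x Ix; have := congr1 val (gk x Ix); rewrite /= combE inclE // => ->.
Qed.
End DualBasis.

Lemma fg_idealE (R : comPzRingType) (I : R -> Prop) : fg_ideal I -> exists s, I = ideal_span s.
Proof. by move=> [s Is]; exists s; apply/funext => x; apply/propext. Qed.

Lemma semi_hereditaryP (R : comPzRingType) :
  semi_hereditary R <-> forall s : seq R, dual_basis s.
Proof.
split=> [sh s | db I /fg_idealE[s ->]].
  by apply/projective_dual_basis/sh; exists s.
exact/dual_basis_projective/db.
Qed.

Section MaximalIdeals.
Variable R : comPzRingType.

Lemma maximal_ideal_prime (m : R -> Prop) : maximal_ideal m ->
  forall x y, ~ m x -> ~ m y -> ~ m (x * y).
Proof.
move=> [idm nm1 mmax] x y nmx nmy mxy.
pose J z := exists p r, m p /\ z = p + r * x.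
have idJ : is_ideal J.
  split.
  - by exists 0, 0; split; [apply: ideal0 | ring].
  - move=> _ _ [p [r [mp ->]]] [p' [r' [mp' ->]]].
    by exists (p - p'), (r - r'); split; [apply: idealB | ring].
  - move=> c _ [p [r [mp ->]]].
    by exists (c * p), (c * r); split; [apply: idealM | ring].
have mJ z : m z -> J z by move=> mz; exists z, 0; split=> //; ring.
have [Jm|[p [r [mp e1]]]] := mmax J idJ mJ.
  by apply: nmx; apply/Jm; exists 0, 1; split; [apply: ideal0 | ring].
apply: nmy; have -> : y = p * y + r * (x * y) by rewrite mulrA -mulrDl -e1 mul1r.
by apply: idealD => //; [apply: idealM_r | apply: idealM].
Qed.

Lemma maximal_ideal_cancel (m : R -> Prop) : maximal_ideal m ->
  forall x y, m (x * y) -> ~ m y -> m x.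
Proof.
move=> mm x y mxy nmy; apply: contrapT => nmx.
exact: maximal_ideal_prime mm _ _ nmx nmy mxy.
Qed.

Section Krull.
Variable G : R -> Prop.

Let proper_above (X : R -> Prop) := [/\ is_ideal X, ~ X 1 & forall x, G x -> X x].
Let empty_or_proper_above (X : R -> Prop) := (forall x, ~ X x) \/ proper_above X.

Lemma chain_union_proper_above (F : (R -> Prop) -> Prop) X0 x0 :
  (forall X, F X -> empty_or_proper_above X) ->
  classical_sets.total_on F classical_sets.subset -> F X0 -> X0 x0 ->
  proper_above (fun x => exists2 X, F X & X x).
Proof.
move=> FP Ftot FX0 X0x0.
have proper_in X x : F X -> X x -> proper_above X by move=> /FP[/(_ x) //|].
have [_ _ GX0] := proper_in _ _ FX0 X0x0.
have common X1 X2 x1 x2 : F X1 -> F X2 -> X1 x1 -> X2 x2 ->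
    exists2 X, F X & [/\ X x1, X x2 & is_ideal X].
  move=> F1 F2 X1x1 X2x2; have [X12|X21] := Ftot _ _ F1 F2.
  - by exists X2 => //; split=> //; [apply: X12 | case: (proper_in _ _ F2 X2x2)].
  - by exists X1 => //; split=> //; [apply: X21 | case: (proper_in _ _ F1 X1x1)].
split; first split.
- by exists X0 => //; case: (proper_in _ _ FX0 X0x0) => idX0 _ _; apply: ideal0.
- move=> x z [X1 F1 X1x] [X2 F2 X2z].
  have [X FX [Xx Xz idX]] := common _ _ _ _ F1 F2 X1x X2z.
  by exists X => //; apply: idealB.
- move=> r x [X FX Xx]; exists X => //.
  by case: (proper_in _ _ FX Xx) => idX _ _; apply: idealM.
- by move=> [X FX X1]; case: (proper_in _ _ FX X1).
- by move=> x Gx; exists X0 => //; apply: GX0.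
Qed.

Lemma maximal_ideal_above : is_ideal G -> ~ G 1 ->
  exists2 m, maximal_ideal m & forall x, G x -> m x.
Proof.
move=> idG nG1.
have [|M [[M0|[idM nM1 GM]] Mmax]] := @classical_sets.Zorn_bigcup R empty_or_proper_above.
- move=> F FP Ftot.
  have [[X0 FX0 [x0 X0x0]]|none] := pselect (exists2 X, F X & exists x, X x).
    by right; apply: chain_union_proper_above FX0 X0x0.
  by left=> x [X FX Xx]; apply: none; exists X => //; exists x.
- exfalso; apply: (Mmax G); last by right.
  by split=> [x /M0 // | GM]; apply: (M0 0); apply: GM; apply: ideal0.
exists M => //; split=> // J idJ MJ.
have [J1|nJ1] := pselect (J 1); [by right | left=> x; split; last exact: MJ].
move=> Jx; apply: contrapT => nMx; apply: (Mmax J).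
  by split=> // JM; apply: nMx; apply: JM.
by right; split=> // y /GM /MJ.
Qed.
End Krull.
End MaximalIdeals.

Section LocalCriterion.
Variable R : comPzRingType.

Definition loc_divisibility_total (P : R -> Prop) : Prop :=
  forall x y, exists s r, ~ P s /\ (s * x = r * y \/ s * y = r * x).

(* In [R_P], either [x] vanishes or [Ann x] vanishes, the latter witnessed by one
   [t] outside [P] for the whole of [Ann x]. *)
Definition loc_ann_dichotomy (P : R -> Prop) : Prop :=
  forall x, (exists s, ~ P s /\ s * x = 0) \/
            (exists t, ~ P t /\ forall z, z * x = 0 -> t * z = 0).

Variable s : seq R.

Definition dual_basis_multiplier (c : R) : Prop :=
  exists psi : 'I_(size s) -> R -> R,
    (forall i, linear_on (V := R^o) (N := R^o) (ideal_span s) (psi i)) /\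
    forall x, ideal_span s x -> c * x = \sum_(i < size s) psi i x * s`_i.

Lemma dual_basis_multiplier_ideal : is_ideal dual_basis_multiplier.
Proof.
split.
- exists (fun _ _ => 0); split=> [i|x _]; last by rewrite mul0r big1 // => i _; rewrite mul0r.
  by split=> *; rewrite ?addr0 ?scaler0.
- move=> c d [p [p_lin pE]] [q [q_lin qE]]; exists (fun i x => p i x - q i x); split.
    move=> i; have [pD pZ] := p_lin i; have [qD qZ] := q_lin i.
    split=> [x y Ix Iy | r x Ix]; first by rewrite pD // qD //; ring.
    by rewrite pZ // qZ // /GRing.scale /=; ring.
  move=> x Ix; rewrite mulrBl pE // qE // -sumrB.
  by apply: eq_bigr => i _; rewrite mulrBl.
- move=> r c [p [p_lin pE]]; exists (fun i x => r * p i x); split.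
    move=> i; have [pD pZ] := p_lin i.
    by split=> [x y Ix Iy | a x Ix]; rewrite ?pD ?pZ // /GRing.scale /=; ring.
  move=> x Ix; rewrite -mulrA pE // mulr_sumr.
  by apply: eq_bigr => i _; rewrite mulrA.
Qed.

Lemma span_coef_ex x : exists c : 'I_(size s) -> R,
  ideal_span s x -> x = \sum_(i < size s) c i * s`_i.
Proof.
have [[c cE]|nIx] := pselect (ideal_span s x); first by exists c.
by exists (fun=> 0).
Qed.

Definition span_coef x := proj1_sig (cid (span_coef_ex x)).

Lemma span_coefE x : ideal_span s x -> x = \sum_(i < size s) span_coef x i * s`_i.
Proof. by rewrite /span_coef; case: cid. Qed.

Section Dominant.
Variables (j : 'I_(size s)) (s0 : R) (r : 'I_(size s) -> R).
Hypothesis dom : forall i : 'I_(size s), s0 * s`_i = r i * s`_j.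

Lemma dominant_comb (c : 'I_(size s) -> R) :
  (\sum_(i < size s) c i * r i) * s`_j = s0 * \sum_(i < size s) c i * s`_i.
Proof.
rewrite mulr_suml mulr_sumr; apply: eq_bigr => i _.
by rewrite -mulrA -dom; ring.
Qed.

Lemma dominant_multiplier_killed s1 : s1 * s`_j = 0 -> dual_basis_multiplier (s1 * s0).
Proof.
move=> s1j; exists (fun _ _ => 0); split.
  by move=> i; split=> *; rewrite ?addr0 ?scaler0.
move=> _ [c ->]; rewrite [RHS]big1 => [|i _]; last by rewrite mul0r.
by rewrite -mulrA -dominant_comb mulrCA s1j mulr0.
Qed.

(* Away from [t * s0], [ideal_span s] is free on [s_j], so [x |-> t * (x / s_j)]
   is the only nonzero coordinate. *)
Lemma dominant_multiplier_free t : (forall z, z * s`_j = 0 -> t * z = 0) ->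
  dual_basis_multiplier (t * s0).
Proof.
move=> t_ann; pose quo x := t * \sum_(i < size s) span_coef x i * r i.
have quo_comb (c : 'I_(size s) -> R) : quo (\sum_(i < size s) c i * s`_i) =
    t * \sum_(i < size s) c i * r i.
  apply/eqP; rewrite -subr_eq0 -mulrBr; apply/eqP/t_ann.
  rewrite mulrBl !dominant_comb -span_coefE ?subrr //; first by exists c.
have idI := ideal_span_ideal s.
exists (fun i x => if i == j then quo x else 0); split.
  move=> k; case: eqP => _; last by split=> *; rewrite ?addr0 ?scaler0.
  split=> [_ _ [c ->] [d ->] | a _ [c ->]].
  - have -> : \sum_(i < size s) c i * s`_i + \sum_(i < size s) d i * s`_i =
        \sum_(i < size s) (c i + d i) * s`_i.
      by rewrite -big_split; apply: eq_bigr => i _; rewrite mulrDl.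
    rewrite !quo_comb -mulrDr -big_split /=; congr (_ * _).
    by apply: eq_bigr => i _; rewrite mulrDl.
  - have -> : a *: (\sum_(i < size s) c i * s`_i : R^o) =
        \sum_(i < size s) (a * c i) * s`_i.
      by rewrite [LHS]mulr_sumr; apply: eq_bigr => i _; rewrite mulrA.
    rewrite !quo_comb /GRing.scale /= mulrCA [a * _]mulr_sumr; congr (_ * _).
    by apply: eq_bigr => i _; rewrite mulrA.
move=> x Ix; rewrite (bigD1 j) //= eqxx big1 ?addr0 => [|i /negbTE ->]; last by rewrite mul0r.
by rewrite /quo -[RHS]mulrA dominant_comb mulrA -span_coefE.
Qed.
End Dominant.

Section AtMaximal.
Variable P : R -> Prop.
Hypotheses (Pmax : maximal_ideal P) (Ptotal : loc_divisibility_total P).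
Hypothesis Pann : loc_ann_dichotomy P.

Let PM := maximal_ideal_prime Pmax.

Lemma loc_dominant_generator : (0 < size s)%N ->
  exists (j : 'I_(size s)) s0 (r : 'I_(size s) -> R),
    ~ P s0 /\ forall i : 'I_(size s), s0 * s`_i = r i * s`_j.
Proof.
move=> s_gt0.
suff /(_ (size s)) [j [s0 [r [Ps0 dom]]]] : forall k, exists (j : 'I_(size s)) s0
    (r : 'I_(size s) -> R), ~ P s0 /\ forall i : 'I_(size s), (i < k)%N -> s0 * s`_i = r i * s`_j.
  by exists j, s0, r; split=> // i; apply: dom.
elim=> [|k [j [s0 [r [Ps0 dom]]]]].
  by exists (Ordinal s_gt0), 1, (fun=> 0); split=> //; case: Pmax.
have [k_lt|k_ge] := ltnP k (size s); last first.
  by exists j, s0, r; split=> // i _; apply: dom; apply: leq_trans (ltn_ord i) k_ge.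
pose kk := Ordinal k_lt.
have neq_kk (i : 'I_(size s)) : (i < k)%N -> (i == kk) = false.
  by move=> ik; apply/negbTE/eqP => ikk; move: ik; rewrite ikk ltnn.
have [a [c [Pa [ac|ac]]]] := Ptotal s`_kk s`_j.
- exists j, (a * s0), (fun i => if i == kk then s0 * c else a * r i); split; first exact: PM.
  move=> i; rewrite ltnS leq_eqVlt => /orP[/eqP ik|ik].
    have -> : i = kk by apply: val_inj.
    by rewrite eqxx mulrAC ac; ring.
  by rewrite neq_kk // -mulrA dom // mulrA.
- exists kk, (a * s0), (fun i => if i == kk then a * s0 else r i * c); split; first exact: PM.
  move=> i; rewrite ltnS leq_eqVlt => /orP[/eqP ik|ik].
    have -> : i = kk by apply: val_inj.
    by rewrite eqxx.
  by rewrite neq_kk // -mulrA dom // mulrCA ac mulrA.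
Qed.

Lemma loc_dual_basis_multiplier : exists2 c, ~ P c & dual_basis_multiplier c.
Proof.
have [s_eq0|s_gt0] := posnP (size s).
  exists 1; first by case: Pmax.
  exists (fun _ _ => 0); split; first by move=> i; split=> *; rewrite ?addr0 ?scaler0.
  by move=> _ [c ->]; rewrite mul1r; apply: eq_bigr => i; have := ltn_ord i; rewrite {2}s_eq0.
have [j [s0 [r [Ps0 dom]]]] := loc_dominant_generator s_gt0.
have [[s1 [Ps1 s1j]]|[t [Pt t_ann]]] := Pann s`_j.
  by exists (s1 * s0); [exact: PM | exact: dominant_multiplier_killed s1j].
by exists (t * s0); [exact: PM | apply: dominant_multiplier_free t_ann; exact: dom].
Qed.
End AtMaximal.

Lemma dual_basis_of_loc : (forall P, maximal_ideal P ->
  loc_divisibility_total P /\ loc_ann_dichotomy P) -> dual_basis s.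
Proof.
move=> loc; have [[psi [psi_lin psiE]]|not1] := pselect (dual_basis_multiplier 1).
  by exists psi; split=> // x Ix; rewrite -psiE // mul1r.
have [P Pmax sub] := maximal_ideal_above dual_basis_multiplier_ideal not1.
have [Ptotal Pann] := loc P Pmax.
by have [c Pc /sub] := loc_dual_basis_multiplier Pmax Ptotal Pann.
Qed.
End LocalCriterion.

Lemma semi_hereditary_of_loc (R : comPzRingType) : (forall P : R -> Prop, maximal_ideal P ->
  loc_divisibility_total P /\ loc_ann_dichotomy P) -> semi_hereditary R.
Proof. by move=> loc; apply/semi_hereditaryP => s; apply: dual_basis_of_loc. Qed.

Section SemiHereditary.
Variable R : comPzRingType.
Hypothesis shR : semi_hereditary R.

Lemma semi_hereditary_ann (a : R) :
  exists e, e * a = 0 /\ forall z, z * a = 0 -> z * e = z.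
Proof.
have [psi [psi_lin psiE]] := (semi_hereditaryP R).1 shR [:: a].
have Ia : ideal_span [:: a] a by exists (fun=> 1); rewrite big_ord1 mul1r.
have [_ psiZ] := psi_lin ord0.
have psi0 : psi ord0 0 = 0 by have := psiZ 0 a Ia; rewrite !scale0r.
have aE := psiE a Ia; rewrite big_ord1 in aE.
exists (1 - psi ord0 a); split; first by rewrite mulrBl mul1r -aE subrr.
move=> z za; have := psiZ z a Ia; rewrite [z *: _]za psi0 => /esym zpsi.
by rewrite mulrBr mulr1 [_ * psi _ _]zpsi subr0.
Qed.

Lemma semi_hereditary_loc_ann (m : R -> Prop) : is_ideal m -> ~ m 1 ->
  loc_ann_dichotomy m.
Proof.
move=> idm nm1 x; have [e [ex e_id]] := semi_hereditary_ann x.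
have [me|nme] := pselect (m e); last by left; exists e.
right; exists (1 - e); split=> [m1e | z zx].
  by apply: nm1; rewrite -(subrK e 1); apply: idealD.
by rewrite mulrBl mul1r mulrC e_id // subrr.
Qed.

(* From the dual basis [a = al a + be c], [c = ga a + de c] of [(a, c)] we get
   [c al = a ga] and [c be = a de]; if both [al] and [de] lie in [m], then
   [1 - al - de] lies outside [m] and kills [a]. *)
Lemma semi_hereditary_loc_total (m : R -> Prop) : is_ideal m -> ~ m 1 ->
  loc_divisibility_total m.
Proof.
move=> idm nm1 a c.
have [psi [psi_lin psiE]] := (semi_hereditaryP R).1 shR [:: a; c].
have Ia : ideal_span [:: a; c] a.
  by exists (fun i => (i == ord0)%:R); rewrite big_ord_recr big_ord1 /=; ring.
have Ic : ideal_span [:: a; c] c.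
  by exists (fun i => (i != ord0)%:R); rewrite big_ord_recr big_ord1 /=; ring.
have aE := psiE a Ia; have cE := psiE c Ic.
rewrite !big_ord_recl big_ord0 addr0 /= in aE cE.
have cross (i : 'I_2) : c * psi i a = a * psi i c.
  have [_ psiZ] := psi_lin i.
  by rewrite -[c * _]psiZ // -[a * _]psiZ //; congr (psi i _); apply: mulrC.
have cross0 := cross ord0; have cross1 := cross (lift ord0 ord0).
set al := psi ord0 a in aE cross0; set be := psi (lift ord0 ord0) a in aE cross1.
set ga := psi ord0 c in cE cross0; set de := psi (lift ord0 ord0) c in cE cross1.
have [mal|nal] := pselect (m al); last first.
  by exists al, ga; split=> //; right; rewrite mulrC cross0 mulrC.
have [mde|nde] := pselect (m de); last first.
  by exists de, be; split=> //; left; rewrite mulrC -cross1 mulrC.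
exists (1 - al - de), 0; split.
  move=> m1; apply: nm1; have -> : 1 = (1 - al - de) + (al + de) by ring.
  by apply: idealD => //; apply: idealD.
left; rewrite mul0r; have -> : (1 - al - de) * a = a - (al * a + be * c).
  by rewrite (mulrC be) cross1; ring.
by rewrite -aE subrr.
Qed.
End SemiHereditary.

Section LinearCombinations.
Variables (A : comPzRingType) (V : lmodType A).

Fixpoint lin_comb (ws : seq V) (v : V) : Prop :=
  if ws is w :: ws' then exists a v', lin_comb ws' v' /\ v = a *: w + v' else v = 0.

Lemma lin_comb0 ws : lin_comb ws 0.
Proof. by elim: ws => [|w ws IH] //=; exists 0, 0; rewrite scale0r addr0. Qed.

Lemma lin_combD ws u v : lin_comb ws u -> lin_comb ws v -> lin_comb ws (u + v).
Proof.
elim: ws u v => [|w ws IH] u v /=; first by move=> -> ->; rewrite addr0.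
move=> [a [u' [u'P ->]]] [c [v' [v'P ->]]]; exists (a + c), (u' + v').
by split; [apply: IH | rewrite scalerDl addrACA].
Qed.

Lemma lin_combZ ws r v : lin_comb ws v -> lin_comb ws (r *: v).
Proof.
elim: ws v => [|w ws IH] v /=; first by move=> ->; rewrite scaler0.
move=> [a [v' [v'P ->]]]; exists (r * a), (r *: v').
by split; [apply: IH | rewrite scalerDr scalerA].
Qed.

Lemma lin_comb_mem ws w : w \in ws -> lin_comb ws w.
Proof.
elim: ws => [|w' ws IH] //=; rewrite inE => /orP[/eqP ->|w_in].
  by exists 1, 0; split; [apply: lin_comb0 | rewrite scale1r addr0].
by exists 0, w; split; [apply: IH | rewrite scale0r add0r].
Qed.

Lemma lin_comb_cat ws1 ws2 u v :
  lin_comb ws1 u -> lin_comb ws2 v -> lin_comb (ws1 ++ ws2) (u + v).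
Proof.
elim: ws1 u => [|w ws IH] u /=; first by move=> ->; rewrite add0r.
move=> [a [u' [u'P ->]]] vP; exists a, (u' + v).
by split; [apply: IH | rewrite addrA].
Qed.

Lemma lin_comb_ind ws (P : V -> Prop) : P 0 ->
  (forall a w v, w \in ws -> P v -> P (a *: w + v)) -> forall v, lin_comb ws v -> P v.
Proof.
move=> P0; elim: ws => [|w ws IH] PS v /=; first by move=> ->.
move=> [a [v' [v'P ->]]]; apply: (PS); first exact: mem_head.
by apply: IH v'P => a' w' v'' w'_in; apply: PS; rewrite inE w'_in orbT.
Qed.

Lemma lin_comb_sum n (F : 'I_n -> V) (c : 'I_n -> A) :
  lin_comb [seq F i | i <- index_enum 'I_n] (\sum_(i < n) c i *: F i).
Proof.
elim: (index_enum _) => [|i r IH]; first by rewrite big_nil.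
by rewrite big_cons; exists (c i), (\sum_(j <- r) c j *: F j).
Qed.

Lemma in_spanE (s : seq V) v : in_span s v <-> lin_comb s v.
Proof.
rewrite /in_span; elim: s v => [|w s IH] v /=.
  by split=> [[c ->]|->]; [rewrite big_ord0 | exists (fun=> 0); rewrite big_ord0].
split=> [[c ->]|[a [v' [/IH[c ->] ->]]]].
  rewrite big_ord_recl /=; exists (c ord0), (\sum_(i < size s) c (lift ord0 i) *: s`_i).
  by split=> //; apply/IH; exists (fun i => c (lift ord0 i)).
exists (fun i => if unlift ord0 i is Some j then c j else a).
by rewrite big_ord_recl /= unlift_none; congr (_ + _); apply: eq_bigr => i _; rewrite liftK.
Qed.
End LinearCombinations.

Lemma common_annihilator (A B T : comPzRingType) (f : {rmorphism A -> B})
    (nQ : T -> Prop) (g : T -> B) :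
  nQ 1 -> (forall u v, nQ u -> nQ v -> nQ (u * v)) ->
  g 1 = 1 -> (forall u v, g (u * v) = g u * g v) ->
  forall ks : seq (restr f), (forall k, k \in ks -> exists v, nQ v /\ g v * k = 0) ->
  exists u, nQ u /\ forall c, lin_comb ks c -> g u * c = 0.
Proof.
move=> nQ1 nQM g1 gM; elim=> [|k ks IH] ks_ann.
  by exists 1; split=> // c /= ->; rewrite mulr0.
have [v [nQv vk]] := ks_ann k (mem_head _ _).
have [u [nQu u_ann]] : exists u, nQ u /\ forall c, lin_comb ks c -> g u * c = 0.
  by apply: IH => k' k'_in; apply: ks_ann; rewrite inE k'_in orbT.
exists (v * u); split=> [|_ [a [c [cP ->]]]]; first exact: nQM.
have -> : g (v * u) * (a *: k + c) = f a * g u * (g v * k) + g v * (g u * c) :> B.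
  by rewrite gM -[a *: k]/(f a * (k : B)); ring.
by rewrite vk u_ann // !mulr0 addr0.
Qed.

Section FiniteGeneration.
Variables (A : comPzRingType) (V : lmodType A).

Definition generates (N : V -> Prop) (ws : seq V) : Prop :=
  (forall w, w \in ws -> N w) /\ forall v, N v -> lin_comb ws v.

Lemma submoduleB (N : V -> Prop) : submodule N -> forall x y, N x -> N y -> N (x - y).
Proof. by move=> [_ ND NZ] x y Nx Ny; rewrite -scaleN1r; apply: ND => //; apply: NZ. Qed.

Lemma submodule_comb (N : V -> Prop) n (c : 'I_n -> A) (F : 'I_n -> V) :
  submodule N -> (forall i, N (F i)) -> N (\sum_i c i *: F i).
Proof.
move=> [N0 ND NZ] NF; elim/big_rec: _ => // i x _ Nx.
by apply: ND => //; apply: NZ.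
Qed.

Lemma lin_comb_submodule (N : V -> Prop) ws : submodule N ->
  (forall w, w \in ws -> N w) -> forall v, lin_comb ws v -> N v.
Proof.
move=> [N0 ND NZ] ws_in; apply: lin_comb_ind => // a w v w_in Nv.
by apply: ND => //; apply: NZ; apply: ws_in.
Qed.

Lemma fg_moduleP (N : V -> Prop) ws : submodule N -> generates N ws -> fg_module N.
Proof.
move=> Nsub [ws_in N_span]; exists ws => v; rewrite in_spanE.
by split=> [/N_span // | ]; apply: lin_comb_submodule.
Qed.

Lemma fg_module_submodule (N : V -> Prop) : fg_module N -> submodule N.
Proof.
move=> [ws wsE]; split=> [|x y|a x]; rewrite !wsE !in_spanE.
- exact: lin_comb0.
- exact: lin_combD.
- exact: lin_combZ.
Qed.

Lemma lin_comb_linear (W : lmodType A) (g : {linear V -> W}) ws v :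
  lin_comb ws v -> lin_comb (map g ws) (g v).
Proof.
elim: ws v => [|w ws IH] v /=; first by move=> ->; rewrite linear0.
by move=> [a [v' [v'P ->]]]; exists a, (g v'); split; [apply: IH | rewrite linearP].
Qed.

Lemma lin_comb_map_linear (g : {linear V -> V}) ws v :
  lin_comb (map g ws) v -> exists2 z, lin_comb ws z & v = g z.
Proof.
elim: ws v => [|w ws IH] v /=; first by move=> ->; exists 0; rewrite ?linear0.
move=> [a [v' [/IH[z z_in ->] ->]]]; exists (a *: w + z); first by exists a, z.
by rewrite linearP.
Qed.
End FiniteGeneration.

Section CoherentKernel.
Variables (A : comPzRingType) (V : lmodType A) (P : V -> Prop) (h : {linear V -> V}).
Hypothesis hP : forall v, P v -> P (h v).

Section Generators.
Variables (cs s' : seq V) (t : seq 'rV[A]_(size s')).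
Variables (z : 'I_(size s') -> V) (al : 'I_(size cs) -> 'I_(size s') -> A).
Hypothesis csE : forall v, P v <-> in_span cs v.
Hypothesis zP : forall j : 'I_(size s'), P (z j).
Hypothesis hz : forall j : 'I_(size s'), s'`_j = h (z j).
Hypothesis hcs : forall i : 'I_(size cs), h cs`_i = \sum_j al i j *: s'`_j.
Hypothesis tE : forall c : 'rV[A]_(size s'),
  \sum_j c ord0 j *: s'`_j = 0 <-> exists d : 'I_(size t) -> A, c = \sum_m d m *: t`_m.

(* [h] sends [cs_i] and [\sum_j al_ij z_j] to the same element, and each relation
   [t_m] among the [h z_j] gives an element of the kernel. *)
Definition ker_gen_cs (i : 'I_(size cs)) : V := cs`_i - \sum_j al i j *: z j.
Definition ker_gen_rel (m : 'I_(size t)) : V := \sum_j t`_m ord0 j *: z j.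
Definition ker_gens : seq V :=
  [seq ker_gen_cs i | i <- index_enum _] ++ [seq ker_gen_rel m | m <- index_enum _].

Let Psub : submodule P.
Proof. by apply: fg_module_submodule; exists cs. Qed.

Lemma ker_gens_in k : k \in ker_gens -> P k /\ h k = 0.
Proof.
rewrite mem_cat => /orP[/mapP[i _ ->]|/mapP[m _ ->]]; rewrite /ker_gen_cs /ker_gen_rel; split.
- apply: (submoduleB Psub); last exact: submodule_comb.
  by apply/csE/in_spanE/lin_comb_mem/mem_nth.
- rewrite linearB linear_sum hcs /=; apply/eqP; rewrite subr_eq0; apply/eqP.
  by apply: eq_bigr => j _; rewrite linearZ hz.
- exact: submodule_comb.
- have t_m_rel : \sum_j t`_m ord0 j *: s'`_j = 0.
    apply/tE; exists (fun m' => (m' == m)%:R).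
    by rewrite (bigD1 m) //= eqxx scale1r big1 ?addr0 // => m' /negbTE ->; rewrite scale0r.
  by rewrite -[RHS]t_m_rel linear_sum; apply: eq_bigr => j _; rewrite linearZ hz.
Qed.

Lemma ker_in_span v : P v -> h v = 0 -> lin_comb ker_gens v.
Proof.
move=> /csE[a vE] hv; pose e := \row_j \sum_i a i * al i j.
have e_rel : \sum_j e ord0 j *: s'`_j = 0.
  rewrite -[RHS]hv vE linear_sum.
  under eq_bigr do rewrite mxE scaler_suml.
  rewrite exchange_big /=; apply: eq_bigr => i _.
  by rewrite linearZ /= hcs scaler_sumr; apply: eq_bigr => j _; rewrite scalerA.
have [d eE] := (tE e).1 e_rel.
have gen_rel : \sum_m d m *: ker_gen_rel m = \sum_j e ord0 j *: z j.
  rewrite eE; under [RHS]eq_bigr do rewrite summxE scaler_suml.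
  rewrite [RHS]exchange_big; apply: eq_bigr => m _ /=.
  by rewrite scaler_sumr; apply: eq_bigr => j _; rewrite mxE scalerA.
have gen_cs : \sum_i a i *: ker_gen_cs i = v - \sum_j e ord0 j *: z j.
  under eq_bigr do rewrite scalerBr.
  rewrite sumrB -vE; congr (_ - _); under eq_bigr do rewrite scaler_sumr.
  rewrite exchange_big; apply: eq_bigr => j _ /=.
  by rewrite mxE scaler_suml; apply: eq_bigr => i _; rewrite scalerA.
rewrite -[v](subrK (\sum_j e ord0 j *: z j)) -gen_cs -gen_rel.
by apply: lin_comb_cat; apply: lin_comb_sum.
Qed.
End Generators.

Lemma kernel_submodule : submodule P -> submodule (fun v => P v /\ h v = 0).
Proof.
move=> [P0 PD PZ]; split=> [|x y [Px hx] [Py hy]|a x [Px hx]].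
- by rewrite linear0.
- by rewrite linearD hx hy addr0; split=> //; apply: PD.
- by rewrite linearZ /= hx scaler0; split=> //; apply: PZ.
Qed.

(* [h P] is a finitely generated submodule of the coherent [P], hence finitely
   presented; its presentation yields generators of the kernel. *)
Lemma coherent_kernel_fg : coherent_module P -> fg_module (fun v => P v /\ h v = 0).
Proof.
move=> [[cs csE] P_coh].
have Psub : submodule P by apply: fg_module_submodule; exists cs.
pose Q := lin_comb (map h cs).
have Qsub : submodule Q.
  by split=> [|x y|a x]; [apply: lin_comb0 | apply: lin_combD | apply: lin_combZ].
have QP v : Q v -> P v.
  apply: lin_comb_submodule => // _ /mapP[c c_in ->].
  by apply/hP/csE/in_spanE/lin_comb_mem.
have Qfg : fg_module Q by exists (map h cs) => v; rewrite in_spanE.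
have [s' [s'E [t tE]]] := P_coh Q Qsub QP Qfg.
have z_ex (j : 'I_(size s')) : exists2 z, P z & s'`_j = h z.
  have : Q s'`_j by apply/s'E/in_spanE/lin_comb_mem/mem_nth.
  by move=> /lin_comb_map_linear[z z_in ->]; exists z => //; apply/csE/in_spanE.
pose z j := s2val (cid2 (z_ex j)).
have al_ex (i : 'I_(size cs)) : exists al : 'I_(size s') -> A, h cs`_i = \sum_j al j *: s'`_j.
  by apply/s'E; apply/lin_comb_mem/map_f/mem_nth.
pose al i := proj1_sig (cid (al_ex i)).
have zP (j : 'I_(size s')) : P (z j) by rewrite /z; case: cid2.
have hz (j : 'I_(size s')) : s'`_j = h (z j) by rewrite /z; case: cid2.
have hcs (i : 'I_(size cs)) : h cs`_i = \sum_j al i j *: s'`_j by rewrite /al; case: cid.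
apply: (fg_moduleP (ws := ker_gens (cs := cs) t z al)); first exact: kernel_submodule.
by split=> [k | v [Pv hv]]; [apply: ker_gens_in | apply: ker_in_span].
Qed.
End CoherentKernel.

Section Noetherian.
Variable A : comPzRingType.
Hypothesis noeA : noetherian A.

Section RowSubmodule.
Variables (k : nat) (N : 'rV[A]_k -> Prop).
Hypothesis Nsub : submodule N.

Definition row_trunc (j : nat) (v : 'rV[A]_k) : Prop :=
  N v /\ forall i : 'I_k, (j <= i)%N -> v ord0 i = 0.

Lemma row_trunc_submodule j : submodule (row_trunc j).
Proof.
have [N0 ND NZ] := Nsub; split.
- by split=> // i _; rewrite mxE.
- by move=> x y [Nx x0] [Ny y0]; split=> [|i ji]; [apply: ND | rewrite mxE x0 ?y0 ?addr0].
- by move=> a x [Nx x0]; split=> [|i ji]; [apply: NZ | rewrite mxE x0 ?mulr0].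
Qed.

(* The [j]-th coordinates of [row_trunc j.+1] form a finitely generated ideal;
   lifting its generators and adding generators of [row_trunc j] generates
   [row_trunc j.+1]. *)
Lemma row_trunc_fg_step j (jk : (j < k)%N) ws : generates (row_trunc j) ws ->
  exists ws', generates (row_trunc j.+1) ws'.
Proof.
move=> [ws_in ws_span]; pose jj := Ordinal jk.
have [tsub0 tsubD tsubZ] := row_trunc_submodule j.+1.
pose J a := exists2 v, row_trunc j.+1 v & v ord0 jj = a.
have idJ : is_ideal J.
  split=> [|_ _ [v Tv <-] [w Tw <-]|r _ [v Tv <-]].
  - by exists 0 => //; rewrite mxE.
  - by exists (v - w); [apply: (submoduleB (row_trunc_submodule _)) | rewrite !mxE].
  - by exists (r *: v); [apply: tsubZ | rewrite !mxE].
have [gs gsE] := noeA idJ.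
have lift_ex (i : 'I_(size gs)) : exists2 v, row_trunc j.+1 v & v ord0 jj = gs`_i.
  by apply/gsE; apply: ideal_span_nth.
pose w i := s2val (cid2 (lift_ex i)).
have wT i : row_trunc j.+1 (w i) by rewrite /w; case: cid2.
have wj i : w i ord0 jj = gs`_i by rewrite /w; case: cid2.
exists ([seq w i | i <- index_enum _] ++ ws); split.
  move=> v; rewrite mem_cat => /orP[/mapP[i _ ->] // | /ws_in [Nv v0]].
  by split=> // i ji; apply: v0; apply: ltnW.
move=> v Tv; have /gsE[c vj] : J (v ord0 jj) by exists v.
rewrite -[v](addrNK (\sum_i c i *: w i)) addrC; apply: lin_comb_cat; first exact: lin_comb_sum.
apply: ws_span; split.
  apply: (submoduleB Nsub); first by case: Tv.
  by apply: submodule_comb => // i; case: (wT i).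
move=> i; rewrite leq_eqVlt => /orP[/eqP ji|ji].
  have -> : i = jj by apply: val_inj.
  rewrite !mxE summxE vj; apply/eqP; rewrite subr_eq0; apply/eqP.
  by apply: eq_bigr => i' _; rewrite mxE wj.
rewrite !mxE summxE (proj2 Tv) // big1 ?subr0 // => i' _.
by rewrite mxE (proj2 (wT i')) // mulr0.
Qed.

Lemma row_submodule_generated : exists ws, generates N ws.
Proof.
suff /(_ k (leqnn k)) [ws [ws_in ws_span]] :
    forall j, (j <= k)%N -> exists ws, generates (row_trunc j) ws.
  exists ws; split=> [w /ws_in[] // | v Nv].
  by apply: ws_span; split=> // i; rewrite leqNgt ltn_ord.
elim=> [_|j IH jk]; last by have [ws ws_gen] := IH (ltnW jk); apply: row_trunc_fg_step ws_gen.
by exists [::]; split=> // v [_ v0] /=; apply/rowP => i; rewrite v0 // mxE.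
Qed.
End RowSubmodule.

Lemma noetherian_submodule_fg (V : lmodType A) (P Q : V -> Prop) :
  fg_module P -> submodule Q -> (forall v, Q v -> P v) -> fg_module Q.
Proof.
move=> [cs csE] Qsub QP.
pose comb (r : 'rV[A]_(size cs)) : V := \sum_i r ord0 i *: cs`_i.
have comb_lin : linear comb.
  move=> a u v; rewrite /comb scaler_sumr -big_split /=.
  by apply: eq_bigr => i _; rewrite !mxE scalerDl scalerA.
pose g : {linear 'rV[A]_(size cs) -> V} :=
  HB.pack comb (GRing.isLinear.Build _ _ _ _ comb comb_lin).
have [ws [ws_in ws_span]] : exists ws, generates (fun r => Q (g r)) ws.
  apply: row_submodule_generated; have [Q0 QD QZ] := Qsub.
  by split=> [|x y Qx Qy|a x Qx]; rewrite ?linear0 ?linearD ?linearZ //=; [apply: QD | apply: QZ].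
apply: (fg_moduleP (ws := map g ws)) => //; split=> [_ /mapP[w /ws_in Qw ->] // | v Qv].
have /csE[c vE] := QP v Qv.
have vg : v = g (\row_i c i) by rewrite vE; apply: eq_bigr => i _; rewrite mxE.
by rewrite vg; apply/lin_comb_linear/ws_span; rewrite -vg.
Qed.
End Noetherian.

Section ValuationLocalization.
Variables (B L : comPzRingType) (n : B -> Prop) (phi : {rmorphism B -> L}).
Hypothesis nM : forall x y, ~ n x -> ~ n y -> ~ n (x * y).
Hypothesis phi_loc : is_localization (fun y => ~ n y) phi.

Lemma loc_divides (y y' : B) z : phi y' = phi y * z ->
  exists s r, ~ n s /\ s * y' = r * y.
Proof.
case: phi_loc => _ phi_ker phi_surj e.
have [w [s [ns ws]]] := phi_surj z.
have /phi_ker[s' ns' s'E] : phi (y' * s - y * w) = 0.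
  by rewrite rmorphB !rmorphM e -ws mulrA subrr.
exists (s' * s), (s' * w); split; first exact: nM.
by apply/eqP; rewrite -subr_eq0 -s'E; apply/eqP; ring.
Qed.

Lemma loc_divisibility_total_valuation : valuation_domain L -> loc_divisibility_total n.
Proof.
case=> _ _ L_total y y'.
have [[z e]|[z e]] := L_total (phi y) (phi y').
  by have [s [r [ns sr]]] := loc_divides e; exists s, r; split=> //; right.
by have [s [r [ns sr]]] := loc_divides e; exists s, r; split=> //; left.
Qed.

Lemma loc_ann_domain : (forall u v : L, u * v = 0 -> u = 0 \/ v = 0) ->
  forall y, (exists s, ~ n s /\ s * y = 0) \/
            (forall z, z * y = 0 -> exists s, ~ n s /\ s * z = 0).
Proof.
case: phi_loc => _ phi_ker _ L_dom y.
have [/phi_ker[s ns sy]|phi_y] := pselect (phi y = 0); first by left; exists s.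
right=> z zy; have /L_dom[/phi_ker[s ns sz]|//] : phi z * phi y = 0.
  by rewrite -rmorphM zy rmorph0.
by exists s.
Qed.
End ValuationLocalization.

Section Amalgamation.
Variables (A B : comPzRingType) (f : {rmorphism A -> B}) (b : {pred B}).
Hypothesis hb : is_ideal (fun x => x \in b).
Local Notation R := (amalg f b hb).

Hypothesis b_loc_zero : forall m : A -> Prop, maximal_ideal m ->
  (forall a : A, f a \in b -> m a) ->
  forall (L : comPzRingType) (phi : {rmorphism B -> L}),
    is_localization (fun y : B => exists a c, [/\ ~ m a, c \in b & y = f a + c]) phi ->
    forall c : B, c \in b -> phi c = 0.
Hypothesis val_loc : forall n : B -> Prop, maximal_ideal n ->
  ~ (forall c : B, c \in b -> n c) ->
  forall (L : comPzRingType) (phi : {rmorphism B -> L}),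
    is_localization (fun y : B => ~ n y) phi -> valuation_domain L.
Hypothesis shA : semi_hereditary A.
Hypothesis b_fg : fg_module (V := restr f) (fun x : restr f => x \in b).
Hypothesis ann_fg : forall y : B, fg_module (V := restr f) (fun c => c \in b /\ y * c = 0).

Lemma amalg_eq (x y : R) : (val x).1 = (val y).1 -> (val x).2 = (val y).2 -> x = y.
Proof.
by move=> e1 e2; apply: val_inj; case: (val x) (val y) e1 e2 => [? ?] [? ?] /= -> ->.
Qed.

Lemma amalg_mem (x : R) : (val x).2 - f (val x).1 \in b.
Proof. by case: x. Qed.

Lemma amalg_fst0 (x : R) : (val x).1 = 0 -> (val x).2 \in b.
Proof. by move=> x1; have := amalg_mem x; rewrite x1 rmorph0 subr0. Qed.

Lemma amalg_diag_mem (a : A) : (a, f a) \in amalg_pred f b.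
Proof. by rewrite inE subrr; exact: (ideal0 hb). Qed.

Definition amalg_diag (a : A) : R := Amalg hb (amalg_diag_mem a).

Lemma amalg_diag_zmod : zmod_morphism amalg_diag.
Proof. by move=> x y; apply: amalg_eq; rewrite /= ?rmorphB. Qed.
HB.instance Definition _ := GRing.isZmodMorphism.Build A R amalg_diag amalg_diag_zmod.

Lemma amalg_diag_monoid : monoid_morphism amalg_diag.
Proof. by split=> [|x y]; apply: amalg_eq; rewrite /= ?rmorph1 ?rmorphM. Qed.
HB.instance Definition _ := GRing.isMonoidMorphism.Build A R amalg_diag amalg_diag_monoid.

Section OverA.
Variable Q : R -> Prop.
Hypotheses (Qmax : maximal_ideal Q) (Q_fst0 : forall x : R, (val x).1 = 0 -> Q x).

Let idQ : is_ideal Q. Proof. by case: Qmax. Qed.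
Let QM := maximal_ideal_prime Qmax.

Definition contrA (a : A) : Prop := Q (amalg_diag a).

Lemma contrAE (x : R) : Q x <-> contrA (val x).1.
Proof.
have xE : x = amalg_diag (val x).1 + (x - amalg_diag (val x).1) by rewrite addrC subrK.
have Qrest : Q (x - amalg_diag (val x).1) by apply: Q_fst0; rewrite /= subrr.
split=> [Qx | QA]; last by rewrite xE; apply: idealD.
by rewrite /contrA -(subKr x (amalg_diag _)); apply: idealB.
Qed.

Lemma contrA_max : maximal_ideal contrA.
Proof.
have [_ nQ1 Qmaxl] := Qmax.
split; first split.
- by rewrite /contrA rmorph0; apply: ideal0.
- by move=> x y Qx Qy; rewrite /contrA rmorphB; apply: idealB.
- by move=> r x Qx; rewrite /contrA rmorphM; apply: idealM.
- by rewrite /contrA rmorph1.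
move=> J idJ QJ; pose QJ' (x : R) := J (val x).1.
have idQJ' : is_ideal QJ'.
  by split=> [|x y|r x]; rewrite /QJ' /=; [apply: ideal0 | apply: idealB | apply: idealM].
have [QJ'E|QJ'1] := Qmaxl QJ' idQJ' (fun x Qx => QJ _ ((contrAE x).1 Qx)); last by right.
by left=> a; split=> [Ja|]; [apply/(QJ'E (amalg_diag a)) | apply: QJ].
Qed.

(* If some [a] outside [contrA] has [f a \in b], then [(a, 0)] kills [b];
   otherwise [contrA] contains [f^-1 b] and [b_(S_m) = 0] applies. *)
Lemma b_loc_killed c : c \in b -> exists v, ~ Q v /\ (val v).2 * c = 0.
Proof.
move=> cb; have contrA_prime := maximal_ideal_prime contrA_max.
have [[a0 [fa0b na0]]|fb_sub] := pselect (exists a0, f a0 \in b /\ ~ contrA a0).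
  have v_mem : (a0, 0) \in amalg_pred f b by rewrite inE sub0r; apply: (idealN hb).
  by exists (Amalg hb v_mem); split; [move/contrAE | rewrite mul0r].
have {}fb_sub a : f a \in b -> contrA a.
  by move=> fab; apply: contrapT => na; apply: fb_sub; exists a.
pose S y := exists a d, [/\ ~ contrA a, d \in b & y = f a + d].
have S1 : S 1.
  exists 1, 0; split; [by case: contrA_max | exact: (ideal0 hb) | by rewrite rmorph1 addr0].
have SM x y : S x -> S y -> S (x * y).
  move=> [a [d [na db ->]]] [a' [d' [na' d'b ->]]].
  exists (a * a'), (f a * d' + d * f a' + d * d'); split; first exact: contrA_prime.
    by do 2?apply: (idealD hb); [apply: (idealM hb) | apply: (idealM_r hb) | apply: (idealM hb)].
  by rewrite rmorphM; ring.
have [L [phi phi_loc]] := exists_localization S1 SM.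
have := b_loc_zero contrA_max fb_sub phi_loc cb.
case: phi_loc => _ phi_ker _ /phi_ker[_ [a [d [na db ->]]] sc].
have v_mem : (a, f a + d) \in amalg_pred f b by rewrite inE /= addrC addKr.
by exists (Amalg hb v_mem); split; first by move/contrAE.
Qed.

(* Locally at [Q], the amalgamation is [A]: the kernel [0 x b] of the first
   projection is killed by a single element outside [Q]. *)
Lemma loc_eq_fst : exists2 u, ~ Q u & forall x y : R, (val x).1 = (val y).1 -> u * x = u * y.
Proof.
have [cs csE] := b_fg.
have cs_killed c : c \in cs -> exists v, ~ Q v /\ (val v).2 * c = 0.
  by move=> c_in; apply: b_loc_killed; apply/csE/in_spanE/lin_comb_mem.
have [|u [nu u_ann]] := common_annihilator (T := R) (nQ := fun v => ~ Q v)
  (g := fun v => (val v).2) _ QM (erefl _) (fun _ _ => erefl _) cs_killed.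
  by case: Qmax.
exists u => // x y xy; apply/eqP; rewrite -subr_eq0 -mulrBr; apply/eqP/amalg_eq.
  by rewrite /= xy subrr mulr0.
by rewrite /= u_ann //; apply/in_spanE/csE; apply: (@amalg_fst0 (x - y)); rewrite /= xy subrr.
Qed.

Let contrA_proper : is_ideal contrA /\ ~ contrA 1.
Proof. by case: contrA_max. Qed.

Lemma loc_divisibility_total_overA : loc_divisibility_total Q.
Proof.
have [u nu u_fst] := loc_eq_fst; have [idA nA1] := contrA_proper.
move=> x y; have [s [r [ns sr]]] := semi_hereditary_loc_total shA idA nA1 (val x).1 (val y).1.
exists (u * amalg_diag s), (u * amalg_diag r); split; first exact: QM.
by rewrite -!mulrA; case: sr => e; [left | right]; apply: u_fst; rewrite /= e.
Qed.

Lemma loc_ann_dichotomy_overA : loc_ann_dichotomy Q.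
Proof.
have [u nu u_fst] := loc_eq_fst; have [idA nA1] := contrA_proper.
move=> x; case: (semi_hereditary_loc_ann shA idA nA1 (val x).1) => [[s [ns sx]]|[t [nt t_ann]]].
  left; exists (u * amalg_diag s); split; first exact: QM.
  by rewrite -mulrA (u_fst _ 0) ?mulr0 //= sx.
right; exists (u * amalg_diag t); split=> [|z zx]; first exact: QM.
rewrite -mulrA (u_fst _ 0) ?mulr0 //= t_ann //.
by have /(congr1 (fun w : R => (val w).1)) := zx.
Qed.
End OverA.

Section OverB.
Variables (Q : R -> Prop) (c0 : B).
Hypotheses (Qmax : maximal_ideal Q) (c0b : c0 \in b).

Let idQ : is_ideal Q. Proof. by case: Qmax. Qed.

Lemma amalg_b_mem y : (0, y * c0) \in amalg_pred f b.
Proof. by rewrite inE rmorph0 subr0; apply: (idealM hb). Qed.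

Definition amalg_b (y : B) : R := Amalg hb (amalg_b_mem y).

Lemma amalg_bM (x : R) y : amalg_b y * x = amalg_b (y * (val x).2).
Proof. by apply: amalg_eq; rewrite /= ?mul0r //; ring. Qed.

Lemma amalg_b0 : amalg_b 0 = 0.
Proof. by apply: amalg_eq; rewrite /= ?mul0r. Qed.

Hypothesis Qc0 : ~ Q (amalg_b 1).

Definition contrB (y : B) : Prop := Q (amalg_b y).

Lemma contrBE (x : R) : Q x <-> contrB (val x).2.
Proof.
rewrite /contrB -[(val x).2]mul1r -amalg_bM.
split=> [|Qx]; first exact: idealM.
by apply: (maximal_ideal_cancel (x := x) Qmax _ Qc0); rewrite mulrC.
Qed.

Lemma contrB_max : maximal_ideal contrB.
Proof.
have [_ _ Qmaxl] := Qmax.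
have amalg_b_sub y y' : amalg_b (y - y') = amalg_b y - amalg_b y'.
  by apply: amalg_eq; rewrite /= ?subrr // mulrBl.
split; first split.
- by rewrite /contrB amalg_b0; apply: ideal0.
- by move=> y y' Qy Qy'; rewrite /contrB amalg_b_sub; apply: idealB.
- move=> r y Qy; apply: (maximal_ideal_cancel Qmax _ Qc0).
  rewrite amalg_bM /= mul1r -mulrA -[y * c0]/((val (amalg_b y)).2) -amalg_bM.
  exact: idealM.
- exact: Qc0.
move=> J idJ QJ; pose QJ' (x : R) := J (val x).2.
have idQJ' : is_ideal QJ'.
  by split=> [|x y|r x]; rewrite /QJ' /=; [apply: ideal0 | apply: idealB | apply: idealM].
have [QJ'E|QJ'1] := Qmaxl QJ' idQJ' (fun x Qx => QJ _ ((contrBE x).1 Qx)); last by right.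
left=> y; split=> [Jy|]; last exact: QJ.
by apply/(QJ'E (amalg_b y)); rewrite /QJ' /=; apply: idealM_r.
Qed.

Lemma contrB_not_sub_b : ~ (forall c, c \in b -> contrB c).
Proof.
move=> b_sub; apply: Qc0; apply: (maximal_ideal_cancel (x := amalg_b 1) Qmax _ Qc0).
by rewrite amalg_bM /= !mul1r; apply: b_sub.
Qed.

Let contrB_prime := maximal_ideal_prime contrB_max.

Let contrB_loc : exists (L : comPzRingType) (phi : {rmorphism B -> L}),
  is_localization (fun y => ~ contrB y) phi /\ valuation_domain L.
Proof.
have [L [phi phi_loc]] := exists_localization Qc0 contrB_prime.
by exists L, phi; split=> //; apply: val_loc contrB_max contrB_not_sub_b _ _ phi_loc.
Qed.

Lemma loc_divisibility_total_overB : loc_divisibility_total Q.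
Proof.
have [L [phi [phi_loc vL]]] := contrB_loc.
move=> x x'; have [s [r [ns sr]]] :=
  loc_divisibility_total_valuation contrB_prime phi_loc vL (val x).2 (val x').2.
by exists (amalg_b s), (amalg_b r); split=> //; rewrite !amalg_bM; case: sr => ->; [left | right].
Qed.

(* [B_n] is a domain, so each element of [Ann_b (x_2)] is killed locally; since
   [Ann_b (x_2)] is a finitely generated [A]-module, one element kills it all. *)
Lemma loc_ann_dichotomy_overB : loc_ann_dichotomy Q.
Proof.
have [L [phi [phi_loc [_ L_dom _]]]] := contrB_loc.
move=> x; case: (loc_ann_domain phi_loc L_dom (val x).2) => [[s [ns sx]]|ann_killed].
  by left; exists (amalg_b s); split=> //; rewrite amalg_bM sx amalg_b0.
right; have [ks ksE] := ann_fg (val x).2.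
have ks_killed k : k \in ks -> exists v, ~ contrB v /\ id v * k = 0.
  move=> k_in; have [_ xk] := (ksE k).2 ((in_spanE _ _).2 (lin_comb_mem k_in)).
  by apply: ann_killed; rewrite mulrC.
have [|u [nu u_ann]] := common_annihilator (T := B) (g := id) _ contrB_prime
  (erefl _) (fun _ _ => erefl _) ks_killed; first exact: Qc0.
exists (amalg_b u); split=> // z zx; rewrite amalg_bM; apply: amalg_eq => //=.
have zx2 : (val z).2 * (val x).2 = 0 by have /(congr1 (fun w : R => (val w).2)) := zx.
rewrite -mulrA u_ann //; apply/in_spanE/ksE; split; first exact: (idealM hb).
by rewrite mulrA (mulrC (val x).2) zx2 mul0r.
Qed.
End OverB.

Theorem amalg_semi_hereditary : semi_hereditary R.
Proof.
apply: semi_hereditary_of_loc => Q Qmax.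
have [Q_fst0|] := pselect (forall x : R, (val x).1 = 0 -> Q x).
  by split; [apply: loc_divisibility_total_overA | apply: loc_ann_dichotomy_overA].
move=> /existsNP[w /not_implyP[w1 nQw]]; have c0b := amalg_fst0 w1.
have Qc0 : ~ Q (amalg_b c0b 1).
  by rewrite (_ : amalg_b c0b 1 = w) //; apply: amalg_eq; rewrite /= ?w1 ?mul1r.
by split; [apply: loc_divisibility_total_overB Qc0 | apply: loc_ann_dichotomy_overB Qc0].
Qed.
End Amalgamation.

Section AnnihilatorInB.
Variables (A B : comPzRingType) (f : {rmorphism A -> B}) (b : {pred B}).
Hypothesis hb : is_ideal (fun x => x \in b).

Lemma restr_mul_linear (y : B) : linear (fun c : restr f => (y * c : B) : restr f).
Proof. by move=> a u v; rewrite /= /restr_scale mulrDr mulrCA. Qed.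

Definition restr_mul (y : B) : {linear restr f -> restr f} :=
  HB.pack (fun c : restr f => (y * c : B) : restr f)
    (GRing.isLinear.Build _ _ _ _ _ (restr_mul_linear y)).

Lemma ann_b_fg_coherent : coherent_module (V := restr f) (fun x : restr f => x \in b) ->
  forall y : B, fg_module (V := restr f) (fun c => c \in b /\ y * c = 0).
Proof.
move=> coh y; apply: (coherent_kernel_fg (h := restr_mul y)) coh.
by move=> c cb; apply: (idealM hb).
Qed.

Lemma ann_b_fg_noetherian : noetherian A ->
  fg_module (V := restr f) (fun x : restr f => x \in b) ->
  forall y : B, fg_module (V := restr f) (fun c => c \in b /\ y * c = 0).
Proof.
move=> noeA b_fg y; apply: (noetherian_submodule_fg noeA b_fg) => [|c []//].
exact/(kernel_submodule (restr_mul y))/fg_module_submodule.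
Qed.
End AnnihilatorInB.

Theorem corollary4p15 (A B : comPzRingType) (f : {rmorphism A -> B})
  (b : {pred B}) (hb : is_ideal (fun x : B => x \in b))
  (Hloc : forall m : A -> Prop, maximal_ideal m ->
     (forall a : A, f a \in b -> m a) ->
     forall (L : comPzRingType) (phi : {rmorphism B -> L}),
       is_localization (fun y : B => exists a c, [/\ ~ m a, c \in b & y = f a + c]) phi ->
       forall c : B, c \in b -> phi c = 0)
  (Hval : forall n : B -> Prop, maximal_ideal n ->
     ~ (forall c : B, c \in b -> n c) ->
     forall (L : comPzRingType) (phi : {rmorphism B -> L}),
       is_localization (fun y : B => ~ n y) phi -> valuation_domain L)
  (Hcase : (semi_hereditary A /\
              coherent_module (V := restr f) (fun x : restr f => x \in b))
        \/ [/\ semi_hereditary A, noetherian A &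
              fg_module (V := restr f) (fun x : restr f => x \in b)]) :
  semi_hereditary (amalg f b hb).
Proof.
case: Hcase => [[shA coh]|[shA noeA b_fg]].
  exact: (amalg_semi_hereditary Hloc Hval shA (proj1 coh) (ann_b_fg_coherent hb coh)).
exact: (amalg_semi_hereditary Hloc Hval shA b_fg (ann_b_fg_noetherian noeA b_fg)).
Qed.
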